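(* Let $d\ge1$, let $P\subseteq[-1,1]^d$ be a convex $d$-dimensional polytope containing the origin, let $\alpha\le 1$ be a constant, and let $\mathcal{A}$ be an algorithm such that for every $\vec{w}\in\mathbb{R}^d$, $\mathcal{A}(\vec{w})\in P$ and $\mathcal{A}(\vec{w})\cdot\vec{w}\ge\alpha\cdot\max_{\vec{x}\in P}\vec{x}\cdot\vec{w}$. Let $P_1=\{\vec{\pi} : \vec{\pi}\cdot\vec{w}\le\mathcal{A}(\vec{w})\cdot\vec{w}\ \forall\vec{w}\in[-1,1]^d\}$, and let $WSO$ be the weird separation oracle defined (with arbitrary parameters $N\in\mathbb{N}$, $\delta>0$) as in the context. If $\vec{\pi}\in P_1$, then $WSO(\vec{\pi})=$''yes''.
   Context: ''Running the ellipsoid algorithm with a weird separation oracle'' (an algorithm which on input $\vec{x}$ outputs either ''yes'' or a hyperplane violated by $\vec{x}$, the set of accepted points not necessarily being convex) means: start from a suitable initial ellipsoid; query the oracle on the center of the current ellipsoid; if accepted, output it as a feasible point; otherwise update the ellipsoid using the returned violated hyperplane as in the standard ellipsoid algorithm; repeat for a predetermined number $N$ of iterations, and if no feasible point is found, output ''infeasible''. The oracle $WSO$, on input $\vec{\pi}\in\mathbb{R}^d$, runs the ellipsoid algorithm for $N$ iterations on the following problem in the variables $(\vec{w},t)$: constraints $\vec{w}\in[-1,1]^d$; $t-\vec{\pi}\cdot\vec{w}\le-\delta$; and the weird oracle $\widehat{WSO}(\vec{w},t)$, which answers ''yes'' if $t\ge\mathcal{A}(\vec{w})\cdot\vec{w}$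 and otherwise outputs the violated hyperplane $t'\ge\mathcal{A}(\vec{w})\cdot\vec{w}'$ (in the variables $(\vec{w}',t')$). If this inner ellipsoid run outputs ''infeasible'', $WSO(\vec{\pi})=$''yes''; if it finds a feasible point $(t^*,\vec{w}^* )$, $WSO$ outputs the violated hyperplane $\vec{w}^*\cdot\vec{\pi}'\le t^*$ (in the variable $\vec{\pi}'$). *)

From HB Require Import structures.
From mathcomp Require Import all_boot all_order all_algebra.
Set Implicit Arguments. Unset Strict Implicit. Unset Printing Implicit Defensive.
Import Order.TTheory GRing.Theory Num.Theory.
Local Open Scope ring_scope.

Definition dotv (R : numDomainType) (n : nat) (u v : 'cV[R]_n) : R :=
  \sum_(i < n) u i ord0 * v i ord0.

Definition in_box (R : numDomainType) (n : nat) (x : 'cV[R]_n) : Prop :=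
  forall i, `|x i ord0| <= 1.

(* Answer of a separation oracle: "yes", or a hyperplane  a . y <= b  (in y)
   violated by the queried point. *)
Inductive answer (R : Type) (n : nat) : Type :=
| Yes : answer R n
| Cut : 'cV[R]_n -> R -> answer R n.
Arguments Yes {R n}.

Definition in_conv (R : numDomainType) (d : nat) (V : seq 'cV[R]_d) (x : 'cV[R]_d) : Prop :=
  exists lam : 'I_(size V) -> R,
    (forall i, 0 <= lam i) /\ \sum_i lam i = 1 /\ x = \sum_i lam i *: V`_i.

(* P is a convex d-dimensional polytope: the convex hull of finitely many
   points whose affine hull is all of R^d. *)
Definition is_dpolytope (R : numFieldType) (d : nat) (P : 'cV[R]_d -> Prop) : Prop :=
  exists V : seq 'cV[R]_d,
    (forall x, P x <-> in_conv V x) /\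
    \rank (\matrix_(i < size V, j < d) (V`_i - V`_0) j ord0) = d.

(* A(w) . w >= alpha * max_{x in P} x . w   (the max is attained on a polytope) *)
Definition approx_max (R : numDomainType) (d : nat) (P : 'cV[R]_d -> Prop)
  (alpha : R) (A : 'cV[R]_d -> 'cV[R]_d) : Prop :=
  forall w, exists xm, P xm /\ (forall x, P x -> dotv x w <= dotv xm w) /\
                       alpha * dotv xm w <= dotv (A w) w.

Definition in_P1 (R : numDomainType) (d : nat) (A : 'cV[R]_d -> 'cV[R]_d) (pi : 'cV[R]_d) : Prop :=
  forall w, in_box w -> dotv pi w <= dotv (A w) w.

(* Standard central-cut ellipsoid update for E = {y | (y-c)^T Q^{-1} (y-c) <= 1}
   in dimension n, with violated hyperplane a . y <= b (a . c > b). *)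
Definition ell_update (R : rcfType) (n : nat) (c : 'cV[R]_n) (Q : 'M[R]_n) (a : 'cV[R]_n)
  : 'cV[R]_n * 'M[R]_n :=
  let g := Q *m a in
  let s := Num.sqrt ((a^T *m Q *m a) ord0 ord0) in
  (c - ((n.+1)%:R * s)^-1 *: g,
   ((n%:R ^+ 2) / (n%:R ^+ 2 - 1)) *: (Q - (2 / ((n.+1)%:R * s ^+ 2)) *: (g *m g^T))).

(* Ellipsoid algorithm with a (weird) separation oracle O, run for k iterations
   from the ellipsoid (c, Q): Some y = feasible point y found, None = "infeasible". *)
Fixpoint ellipsoid_run (R : rcfType) (n : nat) (O : 'cV[R]_n -> answer R n)
  (k : nat) (c : 'cV[R]_n) (Q : 'M[R]_n) : option 'cV[R]_n :=
  match k with
  | 0 => None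
  | k'.+1 =>
      match O c with
      | Yes => Some c
      | Cut a _ => let cQ := ell_update c Q a in ellipsoid_run O k' cQ.1 cQ.2
      end
  end.

(* Separation oracle of the inner problem in the variables x = (w, t) in R^(d+1):
   w in [-1,1]^d ; t - pi . w <= -delta ; weird oracle \hat{WSO}(w, t). *)
Definition inner_oracle (R : rcfType) (d : nat) (A : 'cV[R]_d -> 'cV[R]_d)
  (pi : 'cV[R]_d) (delta : R) (x : 'cV[R]_(d + 1)) : answer R (d + 1) :=
  let w : 'cV[R]_d := usubmx x in
  let t : R := dsubmx x ord0 ord0 in
  match [pick i | 1 < w i ord0] with
  | Some i => Cut (col_mx (delta_mx i ord0) 0) 1
  | None =>
    match [pick i | w i ord0 < -1] with
    | Some i => Cut (col_mx (- delta_mx i ord0) 0) 1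
    | None =>
      if - delta < t - dotv pi w
      then Cut (col_mx (- pi) 1) (- delta)
      else if dotv (A w) w <= t then Yes
      else Cut (col_mx (A w) (-1)) 0
    end
  end.

Definition WSO (R : rcfType) (d : nat) (A : 'cV[R]_d -> 'cV[R]_d) (N : nat) (delta : R)
  (c0 : 'cV[R]_(d + 1)) (Q0 : 'M[R]_(d + 1)) (pi : 'cV[R]_d) : answer R d :=
  match ellipsoid_run (inner_oracle A pi delta) N c0 Q0 with
  | None => Yes
  | Some x => Cut (usubmx x) (dsubmx x ord0 ord0)
  end.

From HB Require Import structures.
From mathcomp Require Import all_boot all_order all_algebra.
Import Order.TTheory GRing.Theory Num.Theory.
Local Open Scope ring_scope.

(* For pi in P_1, every (w, t) with w in the cube satisfies
   t - pi.w >= t - A(w).w, so the inner problem (t - pi.w <= -delta and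
   t >= A(w).w) is empty; its oracle therefore never accepts, and an
   ellipsoid run with such an oracle can only end with "infeasible". *)

Lemma ellipsoid_run_never_yes (R : rcfType) (n : nat) (O : 'cV[R]_n -> answer R n)
  (k : nat) (c : 'cV[R]_n) (Q : 'M[R]_n) :
  (forall x, O x <> Yes) -> ellipsoid_run O k c Q = None.
Proof.
move=> O_rejects; elim: k c Q => [|k IHk] c Q //=.
by case Oc: (O c) => [|a b]; [case: (O_rejects c) | exact: IHk].
Qed.

Lemma inner_oracle_yes (R : rcfType) (d : nat) (A : 'cV[R]_d -> 'cV[R]_d)
  (pi : 'cV[R]_d) (delta : R) (x : 'cV[R]_(d + 1)) :
  inner_oracle A pi delta x = Yes ->
  [/\ in_box (usubmx x),
      dsubmx x ord0 ord0 - dotv pi (usubmx x) <= - delta &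
      dotv (A (usubmx x)) (usubmx x) <= dsubmx x ord0 ord0].
Proof.
rewrite /inner_oracle.
case: pickP => [//|not_above]; case: pickP => [//|not_below].
case: ltrP => [//|slack]; case: ifP => [A_le _|//]; split=> // i.
by rewrite ler_norml !real_leNgt ?num_real // not_above not_below.
Qed.

Lemma inner_oracle_rejects (R : rcfType) (d : nat) (A : 'cV[R]_d -> 'cV[R]_d)
  (pi : 'cV[R]_d) (delta : R) (x : 'cV[R]_(d + 1)) :
  0 < delta -> in_P1 A pi -> inner_oracle A pi delta x <> Yes.
Proof.
move=> delta_gt0 piP1 /inner_oracle_yes [w_box slack A_le].
have pi_le_t := le_trans (piP1 _ w_box) A_le.
have := le_trans (lerB pi_le_t (lexx (dotv pi (usubmx x)))) slack.
by rewrite subrr oppr_ge0 leNgt delta_gt0.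
Qed.

Theorem fact2 (R : rcfType) (d : nat) (P : 'cV[R]_d -> Prop) (alpha : R)
  (A : 'cV[R]_d -> 'cV[R]_d) (N : nat) (delta : R)
  (c0 : 'cV[R]_(d + 1)) (Q0 : 'M[R]_(d + 1)) (pi : 'cV[R]_d) :
  (1 <= d)%N ->
  is_dpolytope P ->
  (forall x, P x -> in_box x) ->
  P 0 ->
  alpha <= 1 ->
  (forall w, P (A w)) ->
  approx_max P alpha A ->
  0 < delta ->
  in_P1 A pi ->
  WSO A N delta c0 Q0 pi = Yes.
Proof.
move=> _ _ _ _ _ _ _ delta_gt0 piP1; rewrite /WSO ellipsoid_run_never_yes //.
by move=> x; exact: inner_oracle_rejects.
Qed.
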